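(* Let $G$ be a reflexive topological group that respects compactness. Then the convergence group $\Gamma_c G$ is $g$-barrelled.
   Context: All groups are abelian. A convergence structure on a set $X$ assigns to each $x \in X$ a collection of filters on $X$, said to converge to $x$ (written $\mathcal F \to x$). This assignment must satisfy three conditions: the point ultrafilter $\dot x$ converges to $x$; if $\mathcal F \to x$ and $\mathcal G \to x$ then $\mathcal F \cap \mathcal G \to x$; and filters finer than a filter converging to $x$ converge to $x$. A map is continuous if it maps filters converging to $x$ to filters converging to the image of $x$. A convergence group is an abelian group with a convergence structure such that $\mathcal F \to x$, $\mathcal G \to y$ imply $\mathcal F - \mathcal G \to x-y$. Every topological group is a convergence group, with convergent filters being those finer than the neighbourhood filter. $\mathbb T = \mathbb R/\mathbb Z$. For convergence groups $G,H$, $\Gamma(G,H)$ is the group of continuous homomorphisms, and $\Gamma G = \Gamma(G,\mathbb T)$. $\Gamma_s(G,H)$ denotes $\Gamma(G,H)$ with the topology of pointwise convergence (the weak topology). $\Gamma_c(G,H)$ denotes $\Gamma(G,H)$ with the continuous convergence structure: $\Phi \to \varphi$ iff for every $\mathcal F \to x$ in $G$, the filter generated by $\{\{\psi(y):\psi \in A, y \in F\} : A \in \Phi, F \in \mathcal F\}$ converges to $\varphi(x)$ in $H$. Write $\Gamma_s G$, $\Gamma_c G$ when $H = \mathbb T$. A set $M \subseteq \Gamma(G,H)$ is equicontinuous if for every filter $\mathcal F \to 0$ in $G$, the filter $M(\mathcal F)$ converges to $0$ in $H$, where $M(\mathcal F)$ is generated by $\{\varphi(x) : \varphi \in M, x \in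 F\}$, $F \in \mathcal F$. A convergence group $G$ is $g$-barrelled if every compact subset of $\Gamma_s G$ is equicontinuous (as a subset of $\Gamma(G,\mathbb T)$). $G$ is reflexive if the canonical map $\kappa_G : G \to \Gamma_c\Gamma_c G$, $\kappa_G(x)(\varphi) = \varphi(x)$, is an isomorphism of convergence groups. A topological group $G$ respects compactness if every subset of $G$ compact in the weak topology $\sigma(G,\Gamma G)$ (the initial topology induced by all continuous characters) is compact in $G$. *)

From Stdlib Require Import Reals Lra List Classical ClassicalEpsilon ProofIrrelevance.
Open Scope R_scope.

Definition filt (X : Type) := (X -> Prop) -> Prop.

Definition is_filter {X : Type} (F : filt X) : Prop :=
  F (fun _ => True) /\ ~ F (fun _ => False) /\
  (forall A B, F A -> F B -> F (fun x => A x /\ B x)) /\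
  (forall A B : X -> Prop, (forall x, A x -> B x) -> F A -> F B).

Definition pointfilt {X : Type} (x : X) : filt X := fun A => A x.
Definition filt_cap {X : Type} (F G : filt X) : filt X := fun A => F A /\ G A.
(* [filt_le F G] : G is finer than F *)
Definition filt_le {X : Type} (F G : filt X) : Prop := forall A, F A -> G A.
Definition image_filt {X Y : Type} (f : X -> Y) (F : filt X) : filt Y :=
  fun B => F (fun x => B (f x)).

(** * The circle group T = R/Z, represented by [0,1) *)
Definition Tcar : Type := {r : R | 0 <= r < 1}.

Lemma frac_in (r : R) : 0 <= frac_part r < 1.
Proof. destruct (base_fp r) as [H1 H2]. split; lra. Qed.

Definition Tmk (r : R) : Tcar := exist _ (frac_part r) (frac_in r).
Definition tzero : Tcar := exist (fun r => 0 <= r < 1) 0 (conj (Rle_refl 0) Rlt_0_1).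
Definition tadd (a b : Tcar) : Tcar := Tmk (proj1_sig a + proj1_sig b).
Definition topp (a : Tcar) : Tcar := Tmk (- proj1_sig a).
(* quotient metric of R/Z *)
Definition tdist (a b : Tcar) : R :=
  Rmin (Rabs (proj1_sig a - proj1_sig b)) (1 - Rabs (proj1_sig a - proj1_sig b)).
Definition tconv (F : filt Tcar) (t : Tcar) : Prop :=
  forall eps, 0 < eps -> F (fun s => tdist s t < eps).

Lemma Teq (a b : Tcar) : proj1_sig a = proj1_sig b -> a = b.
Proof.
  destruct a as [a Ha], b as [b Hb]; simpl; intros ->.
  f_equal; apply proof_irrelevance.
Qed.

Record cgroup := CGroup {
  gcar :> Type;
  gzero : gcar;
  gadd : gcar -> gcar -> gcar;
  gopp : gcar -> gcar;
  gconv : filt gcar -> gcar -> Prop }.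

Definition gsub (G : cgroup) (x y : G) : G := gadd G x (gopp G y).

Definition is_abgroup (G : cgroup) : Prop :=
  (forall x y z : G, gadd G x (gadd G y z) = gadd G (gadd G x y) z) /\
  (forall x y : G, gadd G x y = gadd G y x) /\
  (forall x : G, gadd G (gzero G) x = x) /\
  (forall x : G, gadd G x (gopp G x) = gzero G).

Definition is_convstruct (G : cgroup) : Prop :=
  (forall x : G, gconv G (pointfilt x) x) /\
  (forall (F H : filt G) (x : G), is_filter F -> is_filter H ->
      gconv G F x -> gconv G H x -> gconv G (filt_cap F H) x) /\
  (forall (F H : filt G) (x : G), is_filter F -> is_filter H ->
      filt_le F H -> gconv G F x -> gconv G H x).

Definition sub_filt (G : cgroup) (F H : filt G) : filt G :=
  fun S => exists A B, F A /\ H B /\ forall a b, A a -> B b -> S (gsub G a b).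

Definition is_convgroup (G : cgroup) : Prop :=
  is_abgroup G /\ is_convstruct G /\
  forall (F H : filt G) (x y : G), is_filter F -> is_filter H ->
    gconv G F x -> gconv G H y -> gconv G (sub_filt G F H) (gsub G x y).

Definition Tgroup : cgroup := CGroup Tcar tzero tadd topp tconv.

Definition is_hom (X Y : cgroup) (f : X -> Y) : Prop :=
  forall x y : X, f (gadd X x y) = gadd Y (f x) (f y).

Definition is_cont (X Y : cgroup) (f : X -> Y) : Prop :=
  forall (F : filt X) (x : X), is_filter F -> gconv X F x ->
    gconv Y (image_filt f F) (f x).

Definition chars (X : cgroup) : Type :=
  {f : X -> Tcar | is_hom X Tgroup f /\ is_cont X Tgroup f}.

Lemma tadd00 : tadd tzero tzero = tzero.
Proof. apply Teq; simpl. rewrite Rplus_0_r. apply fp_R0. Qed.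

Lemma const_zero_chom (X : cgroup) :
  is_hom X Tgroup (fun _ => tzero) /\ is_cont X Tgroup (fun _ => tzero).
Proof.
  split.
  - intros x y; simpl; symmetry; apply tadd00.
  - intros F x HF _ eps Heps. unfold image_filt.
    destruct HF as [HT [_ [_ Hup]]].
    apply (Hup (fun _ => True)); [|exact HT].
    intros _ _. unfold tdist; simpl.
    rewrite Rminus_0_r, Rabs_R0. apply Rle_lt_trans with 0; [|exact Heps].
    apply Rmin_l.
Qed.

Definition char_zero (X : cgroup) : chars X :=
  exist _ (fun _ => tzero) (const_zero_chom X).

(* The pointwise sum / opposite of continuous characters
   is again a continuous character (T being a convergence group); the
   classical case distinction below only serves to avoid proving that fact
   inside the definition (the fallback branch is never taken). *)
Definition char_add (X : cgroup) (f g : chars X) : chars X :=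
  let h := fun x => tadd (proj1_sig f x) (proj1_sig g x) in
  match excluded_middle_informative (is_hom X Tgroup h /\ is_cont X Tgroup h) with
  | left p => exist _ h p
  | right _ => f
  end.

Definition char_opp (X : cgroup) (f : chars X) : chars X :=
  let h := fun x => topp (proj1_sig f x) in
  match excluded_middle_informative (is_hom X Tgroup h /\ is_cont X Tgroup h) with
  | left p => exist _ h p
  | right _ => f
  end.

Definition ccconv (X : cgroup) (Phi : filt (chars X)) (phi : chars X) : Prop :=
  forall (F : filt X) (x : X), is_filter F -> gconv X F x ->
    tconv (fun S => exists A B, Phi A /\ F B /\
             forall psi y, A psi -> B y -> S (proj1_sig psi y))
          (proj1_sig phi x).

Definition Gamma_c (X : cgroup) : cgroup :=
  CGroup (chars X) (char_zero X) (char_add X) (char_opp X) (ccconv X).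

Definition init_open {X I : Type} (f : I -> X -> Tcar) (U : X -> Prop) : Prop :=
  forall x, U x -> exists (l : list I) (eps : R), 0 < eps /\
    forall y, (forall i, In i l -> tdist (f i y) (f i x) < eps) -> U y.

Definition compact_in {X : Type} (op : (X -> Prop) -> Prop) (K : X -> Prop) : Prop :=
  forall C : (X -> Prop) -> Prop,
    (forall U, C U -> op U) ->
    (forall x, K x -> exists U, C U /\ U x) ->
    exists l : list (X -> Prop), (forall U, In U l -> C U) /\
      forall x, K x -> exists U, In U l /\ U x.

Definition Gamma_s_open (X : cgroup) : (chars X -> Prop) -> Prop :=
  init_open (fun (x : X) (phi : chars X) => proj1_sig phi x).

Definition equicontinuous (X : cgroup) (M : chars X -> Prop) : Prop :=
  forall F : filt X, is_filter F -> gconv X F (gzero X) ->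
    tconv (fun S => exists A, F A /\
             forall phi x, M phi -> A x -> S (proj1_sig phi x)) tzero.

Definition g_barrelled (X : cgroup) : Prop :=
  forall M : chars X -> Prop, compact_in (Gamma_s_open X) M -> equicontinuous X M.

Definition is_cg_iso (X Y : cgroup) (f : X -> Y) : Prop :=
  is_hom X Y f /\ is_cont X Y f /\
  exists g : Y -> X, (forall x, g (f x) = x) /\ (forall y, f (g y) = y) /\
                     is_cont Y X g.

Definition reflexive (X : cgroup) : Prop :=
  exists k : X -> Gamma_c (Gamma_c X),
    (forall (x : X) (phi : chars X), proj1_sig (k x) phi = proj1_sig phi x) /\
    is_cg_iso X (Gamma_c (Gamma_c X)) k.

Record tgroup := TGroup {
  tcar :> Type;
  tg0 : tcar;
  tgadd : tcar -> tcar -> tcar;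
  tgopp : tcar -> tcar;
  topen : (tcar -> Prop) -> Prop }.

(* the convergence group associated with a topological group:
   filters finer than the neighbourhood filter *)
Definition tg_cg (G : tgroup) : cgroup :=
  CGroup G (tg0 G) (tgadd G) (tgopp G)
         (fun F x => forall U, topen G U -> U x -> F U).

Definition is_topology {X : Type} (op : (X -> Prop) -> Prop) : Prop :=
  op (fun _ => True) /\
  (forall C : (X -> Prop) -> Prop, (forall U, C U -> op U) ->
     op (fun x => exists U, C U /\ U x)) /\
  (forall U V, op U -> op V -> op (fun x => U x /\ V x)).

Definition is_topgroup (G : tgroup) : Prop :=
  is_abgroup (tg_cg G) /\ is_topology (topen G) /\
  forall (x y : G) (U : G -> Prop), topen G U -> U (gsub (tg_cg G) x y) ->
    exists V W, topen G V /\ topen G W /\ V x /\ W y /\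
      forall a b, V a -> W b -> U (gsub (tg_cg G) a b).

Definition weak_open (G : tgroup) : (G -> Prop) -> Prop :=
  init_open (fun (phi : chars (tg_cg G)) (x : G) => proj1_sig phi x).

Definition respects_compactness (G : tgroup) : Prop :=
  forall K : G -> Prop, compact_in (weak_open G) K -> compact_in (topen G) K.

From Stdlib Require Import Reals List.

(** Let [M] be a compact subset of the dual [Gamma_s (Gamma_c G)].  By
    reflexivity every continuous character [xi] of [Gamma_c G] is the
    evaluation at a point [g xi] of [G]: [xi phi = phi (g xi)].  This
    identity says precisely that [g] is continuous from the pointwise
    topology of [Gamma_s (Gamma_c G)] to the weak topology [sigma(G, Gamma G)]
    (both are initial topologies indexed by [Gamma G]), so [K = g(M)] is
    weakly compact, hence compact in [G] because [G] respects compactness.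
    Finally, a filter converging continuously to [0] in [Gamma_c G] converges
    uniformly to [0] on every compact subset of [G]; applied to [K] this is
    exactly the equicontinuity of [M]. *)

Lemma list_choice {A B : Type} (P : A -> B -> Prop) (l : list A) :
  (forall a, In a l -> exists b, P a b) ->
  exists l' : list B, (forall b, In b l' -> exists a, In a l /\ P a b) /\
                      (forall a, In a l -> exists b, In b l' /\ P a b).
Proof.
  induction l as [|a l IH]; intros Hl.
  - exists nil. split; intros _ [].
  - destruct IH as [l' [Hl'1 Hl'2]]; [intros a' Ha'; apply Hl; now right|].
    destruct (Hl a (or_introl eq_refl)) as [b Hb].
    exists (b :: l'). split.
    + intros b' [<-|Hb'].
      * exists a. split; [now left|exact Hb].
      * destruct (Hl'1 b' Hb') as [a' [Ha' HP]]. exists a'. split; [now right|exact HP].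
    + intros a' [<-|Ha'].
      * exists b. split; [now left|exact Hb].
      * destruct (Hl'2 a' Ha') as [b' [Hb' HP]]. exists b'. split; [now right|exact HP].
Qed.

Lemma filter_finite_meet {X I : Type} (F : filt X) (P : I -> X -> Prop) (l : list I) :
  is_filter F ->
  (forall i, In i l -> exists A, F A /\ forall x, A x -> P i x) ->
  exists A, F A /\ forall i, In i l -> forall x, A x -> P i x.
Proof.
  intros [HFT [_ [HFI _]]].
  induction l as [|i l IH]; intros Hl.
  - exists (fun _ => True). split; [exact HFT|intros _ []].
  - destruct IH as [A [HA HAl]]; [intros j Hj; apply Hl; now right|].
    destruct (Hl i (or_introl eq_refl)) as [A' [HA' HA'i]].
    exists (fun x => A x /\ A' x). split; [now apply HFI|].
    intros j [<-|Hj] x [Hx Hx']; [exact (HA'i x Hx')|exact (HAl j Hj x Hx)].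
Qed.

Lemma compact_image {X Y : Type} (opX : (X -> Prop) -> Prop)
  (opY : (Y -> Prop) -> Prop) (f : X -> Y) (K : X -> Prop) :
  (forall U, opY U -> opX (fun x => U (f x))) ->
  compact_in opX K ->
  compact_in opY (fun y => exists x, K x /\ f x = y).
Proof.
  intros Hf HK C HC Hcov.
  set (pullback := fun (V : X -> Prop) (U : Y -> Prop) =>
                     C U /\ V = (fun x => U (f x))).
  destruct (HK (fun V => exists U, pullback V U)) as [l [Hl Hlcov]].
  - intros V [U [HU ->]]. exact (Hf U (HC U HU)).
  - intros x Hx. destruct (Hcov (f x)) as [U [HU HUx]]; [now exists x|].
    exists (fun x => U (f x)). split; [exists U; now split|exact HUx].
  - destruct (list_choice pullback l Hl) as [l' [Hl'1 Hl'2]].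
    exists l'. split.
    + intros U HU. destruct (Hl'1 U HU) as [V [_ [HCU _]]]. exact HCU.
    + intros y [x [Hx <-]].
      destruct (Hlcov x Hx) as [V [HV HVx]].
      destruct (Hl'2 V HV) as [U [HU [_ ->]]].
      exists U. split; [exact HU|exact HVx].
Qed.

Lemma init_open_comp {X Y I : Type} (f : I -> X -> Tcar) (f' : I -> Y -> Tcar)
  (h : Y -> X) (U : X -> Prop) :
  (forall i y, f' i y = f i (h y)) ->
  init_open f U -> init_open f' (fun y => U (h y)).
Proof.
  intros Hh HU y Hy.
  destruct (HU (h y) Hy) as [l [eps [Heps Hball]]].
  exists l, eps. split; [exact Heps|].
  intros z Hz. apply Hball. intros i Hi. rewrite <- !Hh. exact (Hz i Hi).
Qed.

Definition nbhs_filt (G : tgroup) (x : G) : filt G :=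
  fun B => exists V, topen G V /\ V x /\ forall y, V y -> B y.

Lemma nbhs_filt_filter (G : tgroup) (x : G) :
  is_topology (topen G) -> is_filter (nbhs_filt G x).
Proof.
  intros [HopT [_ HopI]]. split; [|split; [|split]].
  - exists (fun _ => True). split; [exact HopT|split; auto].
  - intros [V [_ [HVx HV]]]. exact (HV x HVx).
  - intros A B [V [HV [HVx HVA]]] [W [HW [HWx HWB]]].
    exists (fun y => V y /\ W y). split; [now apply HopI|].
    split; [now split|]. intros y [HVy HWy]. split; auto.
  - intros A B HAB [V [HV [HVx HVA]]]. exists V. split; [exact HV|split; auto].
Qed.

Lemma nbhs_filt_conv (G : tgroup) (x : G) : gconv (tg_cg G) (nbhs_filt G x) x.
Proof. intros U HU HUx. exists U. split; [exact HU|split; auto]. Qed.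

Lemma reflexive_dual_points (X : cgroup) :
  reflexive X ->
  exists g : chars (Gamma_c X) -> X,
    forall (xi : chars (Gamma_c X)) (phi : chars X),
      proj1_sig xi phi = proj1_sig phi (g xi).
Proof.
  intros [k [Hk [_ [_ [g [_ [Hkg _]]]]]]].
  exists g. intros xi phi. now rewrite <- (Hk (g xi) phi), Hkg.
Qed.

Lemma ccconv_uniform_on_compact (G : tgroup) (K : G -> Prop)
  (Phi : filt (chars (tg_cg G))) :
  is_topology (topen G) -> compact_in (topen G) K -> is_filter Phi ->
  ccconv (tg_cg G) Phi (char_zero (tg_cg G)) ->
  forall eps, 0 < eps -> exists A, Phi A /\
    forall phi y, A phi -> K y -> tdist (proj1_sig phi y) tzero < eps.
Proof.
  intros Htop HK HPhi Hconv eps Heps.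
  (* open sets on which [Phi] is eventually [eps]-small *)
  set (small := fun (U : G -> Prop) (phi : chars (tg_cg G)) =>
                  forall y, U y -> tdist (proj1_sig phi y) tzero < eps).
  destruct (HK (fun U => topen G U /\ exists A, Phi A /\ forall phi, A phi -> small U phi))
    as [l [Hl Hlcov]].
  - intros U [HU _]. exact HU.
  - intros x _.
    destruct (Hconv _ x (nbhs_filt_filter G x Htop) (nbhs_filt_conv G x) eps Heps)
      as [A [B [HA [[V [HV [HVx HVB]]] HAB]]]].
    exists V. split; [|exact HVx].
    split; [exact HV|]. exists A. split; [exact HA|].
    intros phi Hphi y Hy. exact (HAB phi y Hphi (HVB y Hy)).
  - destruct (filter_finite_meet Phi small l HPhi) as [A [HA HAl]].
    + intros U HU. exact (proj2 (Hl U HU)).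
    + exists A. split; [exact HA|].
      intros phi y Hphi Hy.
      destruct (Hlcov y Hy) as [U [HU HUy]].
      exact (HAl U HU phi Hphi y HUy).
Qed.

Theorem proposition2p5 (G : tgroup) (hG : is_topgroup G)
  (hrefl : reflexive (tg_cg G)) (hresp : respects_compactness G) :
  g_barrelled (Gamma_c (tg_cg G)).
Proof.
  destruct hG as [_ [Htop _]].
  destruct (reflexive_dual_points _ hrefl) as [g Hev].
  intros M HM.
  set (K := fun y : G => exists xi, M xi /\ g xi = y).
  assert (HKweak : compact_in (weak_open G) K).
  { apply (compact_image (Gamma_s_open _) _ g M); [|exact HM].
    intros U HU. exact (init_open_comp _ _ g U (fun phi xi => Hev xi phi) HU). }
  intros Phi HPhi Hconv eps Heps.
  destruct (ccconv_uniform_on_compact G K Phi Htop (hresp K HKweak) HPhi Hconv eps Heps)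
    as [A [HA HAK]].
  exists A. split; [exact HA|].
  intros xi phi Hxi Hphi. rewrite Hev.
  apply HAK; [exact Hphi|]. now exists xi.
Qed.
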